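(* Let $g\ge1$, $n=g+1$, and let $Q$ be the $g\times g$ matrix with $Q_{ii}=2$, $Q_{ij}=1$ for $i\ne j$. Let $k\in\{1,\dots,g\}$ and let $\mathbf a\in[\mathbf k]$ be a vertex of $V_Q$. Then the Delaunay polytope $D_{\mathbf a,Q}$ is combinatorially equivalent to the hypersimplex $\Delta_{k,n}$, the matroid base polytope of the uniform matroid $U_{k,n}$.
   Context: $V_Q=\{\mathbf a\in\mathbb R^g:\ \mathbf a^TQ\mathbf a\le(\mathbf a-\mathbf c)^TQ(\mathbf a-\mathbf c)\ \forall\mathbf c\in\mathbb Z^g\}$ (Voronoi polytope of the genus-$g$ banana graph). $[\mathbf k]\subset\mathbb R^g$ is the set of vectors with entries in $\{-\tfrac{k}{g+1},\tfrac{g+1-k}{g+1}\}$ having either $k$ or $k-1$ entries equal to $\tfrac{g+1-k}{g+1}$. $D_{\mathbf a,Q}$ is the convex hull of $\mathcal D_{\mathbf a,Q}=\{\mathbf c\in\mathbb Z^g:\ \mathbf a^TQ\mathbf a=(\mathbf a-\mathbf c)^TQ(\mathbf a-\mathbf c)\}$. $\Delta_{k,n}=\mathrm{Conv}\{\sum_{i\in I}\mathbf e_i:|I|=k\}\subset\mathbb R^n$. *)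

From HB Require Import structures.
From mathcomp Require Import all_boot all_order all_algebra.
From mathcomp Require Import boolp classical_sets reals.
Set Implicit Arguments. Unset Strict Implicit. Unset Printing Implicit Defensive.
Import Order.TTheory GRing.Theory Num.Theory.
Local Open Scope ring_scope.
Local Open Scope classical_set_scope.

Section Defs.
Variable R : realType.

Definition dotv (m : nat) (w x : 'rV[R]_m) : R := \sum_(i < m) w 0 i * x 0 i.

Definition qform (m : nat) (Q : 'M[R]_m) (x : 'rV[R]_m) : R := (x *m Q *m x^T) 0 0.

Definition bananaQ (g : nat) : 'M[R]_g := \matrix_(i, j) (if i == j then 2 else 1).

Definition intpt (m : nat) (z : 'rV[int]_m) : 'rV[R]_m := map_mx (fun k : int => k%:~R) z.

Definition voronoi (m : nat) (Q : 'M[R]_m) : set 'rV[R]_m :=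
  [set a | forall z : 'rV[int]_m, qform Q a <= qform Q (a - intpt z)].

Definition delaunay_pts (m : nat) (Q : 'M[R]_m) (a : 'rV[R]_m) : set 'rV[R]_m :=
  [set c | exists z : 'rV[int]_m, c = intpt z /\ qform Q a = qform Q (a - c)].

Definition conv (m : nat) (S : set 'rV[R]_m) : set 'rV[R]_m :=
  [set x | exists (N : nat) (p : 'I_N -> 'rV[R]_m) (t : 'I_N -> R),
     (forall i, S (p i)) /\ (forall i, 0 <= t i) /\ \sum_(i < N) t i = 1 /\
     x = \sum_(i < N) t i *: p i].

Definition delaunay (m : nat) (Q : 'M[R]_m) (a : 'rV[R]_m) : set 'rV[R]_m :=
  conv (delaunay_pts Q a).

(* faces of a convex set P: intersections with supporting hyperplanes
   (w = 0, b = 0 gives P itself; w = 0, b = 1 gives the empty face) *)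
Definition is_face (m : nat) (P F : set 'rV[R]_m) : Prop :=
  exists (w : 'rV[R]_m) (b : R),
    (forall x, P x -> dotv w x <= b) /\ F = [set x | P x /\ dotv w x = b].

Definition is_vertex (m : nat) (P : set 'rV[R]_m) (a : 'rV[R]_m) : Prop :=
  is_face P [set a].

Definition comb_equiv (m n : nat) (P : set 'rV[R]_m) (P' : set 'rV[R]_n) : Prop :=
  exists f : set 'rV[R]_m -> set 'rV[R]_n,
    (forall F, is_face P F -> is_face P' (f F)) /\
    (forall G, is_face P' G -> exists F, is_face P F /\ f F = G) /\
    (forall F G, is_face P F -> is_face P G -> (F `<=` G <-> f F `<=` f G)).

Definition kset (g k : nat) : set 'rV[R]_g :=
  [set a : 'rV[R]_g | (forall i : 'I_g, a 0 i = - (k%:R / g.+1%:R) \/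
                      a 0 i = (g.+1%:R - k%:R) / g.+1%:R) /\
           (#|[set i : 'I_g | a ord0 i == (g.+1%:R - k%:R) / g.+1%:R]%SET| = k \/
            #|[set i : 'I_g | a ord0 i == (g.+1%:R - k%:R) / g.+1%:R]%SET| = k.-1)%N].

Definition hypersimplex (k n : nat) : set 'rV[R]_n :=
  conv [set x | exists I : {set 'I_n}, #|I| = k /\ x = \row_(i < n) (if i \in I then 1 else 0)].

End Defs.

From mathcomp Require Import all_boot all_order all_algebra.
From mathcomp Require Import boolp classical_sets reals.
From mathcomp Require Import ring lra.
Import Order.TTheory GRing.Theory Num.Theory.
Local Open Scope ring_scope.
Local Open Scope classical_set_scope.
Set Implicit Arguments. Unset Strict Implicit. Unset Printing Implicit Defensive.

(* With [M = [-1 | I]] one has [Q = M M^T], so [x^T Q x = |x M|^2].  The affine map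
   [psi x = (a - x) M + kappa 1], [kappa = k / (g + 1)], has an affine left inverse, maps
   [Z^g] onto the integer points of the hyperplane [sum y = k], and satisfies
   [(a - x)^T Q (a - x) = |psi x - kappa 1|^2].  For [a] in [[k]], [psi 0] is a 0/1 vector
   with [k] ones, so [c] is in [D_{a,Q}] iff [y = psi c] is an integer vector with
   [|y|^2 = sum y = k], i.e. a 0/1 vector with [k] ones: a vertex of [Delta_{k,g+1}].
   Affine maps commute with convex hulls, and an injective affine map with an affine
   inverse transports supporting hyperplanes, hence the whole face lattice. *)

Lemma mxOverD (T : nmodType) m n (S : addrClosed T) (A B : 'M[T]_(m, n)) :
  A \is a mxOver S -> B \is a mxOver S -> A + B \is a mxOver S.
Proof.
by move=> /mxOverP SA /mxOverP SB; apply/mxOverP => i j; rewrite mxE rpredD.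
Qed.

Lemma mxOverN (T : zmodType) m n (S : opprClosed T) (A : 'M[T]_(m, n)) :
  A \is a mxOver S -> - A \is a mxOver S.
Proof. by move=> /mxOverP SA; apply/mxOverP => i j; rewrite mxE rpredN. Qed.

Section RowVectors.
Variable R : realType.

Definition vsum n (y : 'rV[R]_n) : R := \sum_(j < n) y 0 j.

Definition charrow n (I : {set 'I_n}) : 'rV[R]_n := \row_(j < n) (if j \in I then 1 else 0).

Lemma dotvE n (w x : 'rV[R]_n) : dotv w x = (w *m x^T) 0 0.
Proof. by rewrite /dotv mxE; apply: eq_bigr => j _; rewrite mxE. Qed.

Lemma dotvDr n (w x y : 'rV[R]_n) : dotv w (x + y) = dotv w x + dotv w y.
Proof. by rewrite /dotv -big_split; apply: eq_bigr => j _; rewrite mxE mulrDr. Qed.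

Lemma dotv_mulmx n m (A : 'M[R]_(n, m)) (w : 'rV[R]_n) (x : 'rV[R]_m) :
  dotv w (x *m A^T) = dotv (w *m A) x.
Proof. by rewrite !dotvE trmx_mul trmxK mulmxA. Qed.

Lemma vsumD n (x y : 'rV[R]_n) : vsum (x + y) = vsum x + vsum y.
Proof. by rewrite /vsum -big_split; apply: eq_bigr => j _; rewrite mxE. Qed.

Lemma vsumB n (x y : 'rV[R]_n) : vsum (x - y) = vsum x - vsum y.
Proof. by rewrite /vsum -sumrB; apply: eq_bigr => j _; rewrite !mxE. Qed.

Lemma vsum_const n c : vsum (const_mx c : 'rV[R]_n) = c *+ n.
Proof.
by rewrite /vsum (eq_bigr (fun=> c)) ?sumr_const ?card_ord // => j _; rewrite mxE.
Qed.

Lemma dotv_shift n (y : 'rV[R]_n) c :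
  dotv (y - const_mx c) (y - const_mx c) = dotv y y - c *+ 2 * vsum y + c ^+ 2 *+ n.
Proof.
rewrite /dotv /vsum.
transitivity (\sum_(j < n) (y 0 j * y 0 j - c *+ 2 * y 0 j + c ^+ 2)).
  by apply: eq_bigr => j _; rewrite !mxE; ring.
by rewrite big_split sumrB -mulr_sumr sumr_const card_ord.
Qed.

Lemma vsum_charrow n (I : {set 'I_n}) : vsum (charrow I) = #|I|%:R.
Proof.
rewrite /vsum (eq_bigr (fun j => if j \in I then 1 else 0)) => [|j _]; last by rewrite mxE.
by rewrite -big_mkcond sumr_const.
Qed.

Lemma charrow_int n (I : {set 'I_n}) : charrow I \is a mxOver Num.int.
Proof. by apply/mxOverP => i j; rewrite mxE; case: ifP. Qed.

Lemma row01_charrow n (y : 'rV[R]_n) : (forall j, y 0 j = 0 \/ y 0 j = 1) ->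
  y = charrow [set j | y 0 j == 1]%SET.
Proof.
move=> y01; apply/matrixP => i j; rewrite ord1 !mxE inE.
by case: (y01 j) => ->; rewrite ?eqxx // eq_sym oner_eq0.
Qed.

Lemma dotv_row01 n (y : 'rV[R]_n) : (forall j, y 0 j = 0 \/ y 0 j = 1) -> dotv y y = vsum y.
Proof. by move=> y01; apply: eq_bigr => j _; case: (y01 j) => ->; rewrite ?mulr0 ?mulr1. Qed.

Lemma charrow01 n (I : {set 'I_n}) j : charrow I 0 j = 0 \/ charrow I 0 j = 1.
Proof. by rewrite mxE; case: ifP; [right|left]. Qed.

Lemma dotv_charrow n (I : {set 'I_n}) : dotv (charrow I) (charrow I) = #|I|%:R.
Proof. by rewrite dotv_row01 ?vsum_charrow // => j; apply: charrow01. Qed.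

Lemma vsum_row_mx m n (x : 'rV[R]_m) (y : 'rV[R]_n) :
  vsum (row_mx x y) = vsum x + vsum y.
Proof.
by rewrite /vsum big_split_ord; congr (_ + _); apply: eq_bigr => j _;
  rewrite ?row_mxEl ?row_mxEr.
Qed.

Lemma mulmx_const_col n (x : 'rV[R]_n) c :
  x *m (const_mx c : 'cV_n) = (vsum x * c)%:M.
Proof.
apply/matrixP => i j; rewrite !ord1 !mxE /= mulr1n mulr_suml.
by apply: eq_bigr => l _; rewrite mxE.
Qed.

(* An integer [t] satisfies [t <= t^2], with equality only for [t = 0, 1]. *)
Lemma int_dotv_vsum_row01 n (y : 'rV[R]_n) : y \is a mxOver Num.int -> dotv y y = vsum y ->
  forall j, y 0 j = 0 \/ y 0 j = 1.
Proof.
move=> /mxOverP yint; rewrite /dotv /vsum => /eqP; rewrite -subr_eq0 -sumrB.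
have ge0 j : 0 <= y 0 j * y 0 j - y 0 j by rewrite subr_ge0 -expr2 intr_ler_sqr.
move=> /eqP /psumr_eq0P - /(_ (fun j _ => ge0 j)) y2y j.
have /eqP : y 0 j * (y 0 j - 1) = 0 by rewrite mulrBr mulr1 y2y.
by rewrite mulf_eq0 subr_eq0 => /orP[] /eqP; [left|right].
Qed.

Lemma intptP m (c : 'rV[R]_m) :
  (exists z, c = intpt R z) <-> c \is a mxOver Num.int.
Proof.
split=> [[z ->]|/mxOverP cint]; first by apply/mxOverP => i j; rewrite mxE intr_int.
by exists (map_mx Num.floor c); apply/matrixP => i j; rewrite !mxE floorK.
Qed.

End RowVectors.

Definition affmap (R : realType) m n (A : 'M[R]_(m, n)) (u : 'rV[R]_n) (x : 'rV[R]_m) :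
  'rV[R]_n := x *m A + u.

Section AffineImage.
Variables (R : realType) (m n : nat) (A : 'M[R]_(m, n)) (u : 'rV[R]_n).
Local Notation f := (affmap A u).

Lemma affmap_conv N (p : 'I_N -> 'rV[R]_m) (t : 'I_N -> R) : \sum_i t i = 1 ->
  f (\sum_i t i *: p i) = \sum_i t i *: f (p i).
Proof.
move=> t1; rewrite /affmap [RHS](eq_bigr _ (fun i _ => scalerDr _ _ _)) big_split /=.
rewrite -scaler_suml t1 scale1r mulmx_suml.
by congr (_ + _); apply: eq_bigr => i _; rewrite scalemxAl.
Qed.

Lemma conv_affmap_image (S : set 'rV[R]_m) : f @` conv S = conv (f @` S).
Proof.
apply/seteqP; split=> [_ [x [N [p [t [Sp [t0 [t1 ->]]]]]] <-]|y].
  exists N, (f \o p), t; split=> [i|]; first by exists (p i).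
  by do 2!split=> //; rewrite affmap_conv.
move=> [N [q [t [Sq [t0 [t1 ->]]]]]].
have /choice [p pP] : forall i, exists x, S x /\ f x = q i.
  by move=> i; have [x Sx fx] := Sq i; exists x.
exists (\sum_i t i *: p i); first by exists N, p, t; split=> // i; exact: (pP i).1.
by rewrite affmap_conv //; apply: eq_bigr => i _; rewrite (pP i).2.
Qed.

Variable B : 'M[R]_(n, m).
Hypothesis AB : A *m B = 1%:M.

Lemma affmap_inj : injective f.
Proof.
move=> x y /addIr e.
by rewrite -[x]mulmx1 -[y]mulmx1 -AB !mulmxA e.
Qed.

Lemma dotv_affmap v x : dotv v (f x) = dotv (v *m A^T) x + dotv v u.
Proof. by rewrite dotvDr -dotv_mulmx trmxK. Qed.

Lemma dotv_affmap_inv w x : dotv w x = dotv (w *m B^T) (f x) - dotv (w *m B^T) u.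
Proof.
by rewrite dotv_affmap addrK -mulmxA -trmx_mul AB trmx1 mulmx1.
Qed.

Section Faces.
Variable D : set 'rV[R]_m.

Lemma is_face_affmap_image F : is_face D F -> is_face (f @` D) (f @` F).
Proof.
move=> [w [b [Dle ->]]]; exists (w *m B^T), (b + dotv (w *m B^T) u).
split=> [_ [x Dx <-]|].
  by have := Dle x Dx; rewrite dotv_affmap_inv lerBlDr.
apply/seteqP; split=> [_ [x [Dx wx] <-]|y [[x Dx <-]]].
  by split; [exists x|apply/eqP; rewrite -subr_eq -dotv_affmap_inv wx].
by move=> /eqP; rewrite -subr_eq -dotv_affmap_inv => /eqP wx; exists x.
Qed.

Lemma is_face_affmap_preimage G : is_face (f @` D) G ->
  exists F, is_face D F /\ f @` F = G.
Proof.
move=> [v [b [Dle ->]]].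
exists [set x | D x /\ dotv (v *m A^T) x = b - dotv v u]; split.
  exists (v *m A^T), (b - dotv v u); split=> // x Dx.
  by rewrite lerBrDr -dotv_affmap; apply: Dle; exists x.
apply/seteqP; split=> [_ [x [Dx vx] <-]|y [[x Dx <-]]].
  by split; [exists x|rewrite dotv_affmap vx subrK].
by rewrite dotv_affmap => vx; exists x => //; split=> //; rewrite -vx addrK.
Qed.

Lemma comb_equiv_affmap_image : comb_equiv D (f @` D).
Proof.
exists (fun F => f @` F); split; first exact: is_face_affmap_image.
split; first exact: is_face_affmap_preimage.
move=> F G _ _; split=> [FG _ [x Fx <-]|fFG x Fx]; first by exists x => //; apply: FG.
by have [y Gy /affmap_inj <-] := fFG (f x) (ex_intro2 _ _ x Fx erefl).
Qed.

End Faces.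
End AffineImage.

Section BananaLattice.
Variables (R : realType) (g : nat).

(* [x *m bananaM] is the flow on the [g + 1] edges of the banana graph with cycle
   coordinates [x], so [bananaQ] is the Gram matrix of its cycle lattice. *)
Definition bananaM : 'M[R]_(g, 1 + g) := row_mx (const_mx (-1)) 1%:M.
Definition bananaP : 'M[R]_(1 + g, g) := col_mx 0 1%:M.

Lemma bananaQ_factor : bananaQ R g = bananaM *m bananaM^T.
Proof.
rewrite /bananaM tr_row_mx mul_row_col trmx1 mul1mx.
by apply/matrixP => i j; rewrite !mxE big_ord1 !mxE; case: eqP => _ /=; lra.
Qed.

Lemma qform_bananaQ x : qform (bananaQ R g) x = dotv (x *m bananaM) (x *m bananaM).
Proof. by rewrite /qform dotvE bananaQ_factor trmx_mul !mulmxA. Qed.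

Lemma bananaMP : bananaM *m bananaP = 1%:M.
Proof. by rewrite mul_row_col mulmx0 add0r mulmx1. Qed.

Lemma mul_bananaM x : x *m bananaM = row_mx (- vsum x)%:M x.
Proof. by rewrite mul_mx_row mulmx_const_col mulmx1 mulrN1. Qed.

Lemma vsum_mul_bananaM x : vsum (x *m bananaM) = 0.
Proof. by rewrite mul_bananaM vsum_row_mx /vsum big_ord1 mxE addNr. Qed.

Lemma mul_bananaPM y : vsum y = 0 -> y *m bananaP *m bananaM = y.
Proof.
rewrite -{1}(hsubmxK y) vsum_row_mx => /eqP; rewrite addr_eq0 => /eqP y0.
rewrite -{1}(hsubmxK y) mul_row_col mulmx0 add0r mulmx1 mul_bananaM -y0.
rewrite -[RHS](hsubmxK y); congr row_mx.
by apply/matrixP => i j; rewrite !ord1 /vsum big_ord1 !mxE.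
Qed.

Lemma bananaM_int : bananaM \is a mxOver Num.int.
Proof.
apply/mxOverP => i j; rewrite -(splitK j); case: (split j) => j'.
  by rewrite row_mxEl mxE rpredN1.
by rewrite row_mxEr mxE; case: (i == j').
Qed.

Lemma bananaP_int : bananaP \is a mxOver Num.int.
Proof.
apply/mxOverP => i j; rewrite -(splitK i); case: (split i) => i'.
  by rewrite col_mxEu mxE.
by rewrite col_mxEd mxE; case: (i' == j).
Qed.

End BananaLattice.

Section DelaunayPolytope.
Variables (R : realType) (g k : nat) (a : 'rV[R]_g).
Hypotheses (k_gt0 : (0 < k)%N) (a_in_k : kset k a).

Local Notation Q := (bananaQ R g).
Local Notation M := (bananaM R g).

Definition kappa : R := k%:R / g.+1%:R.

Let S := [set i : 'I_g | a ord0 i == (g.+1%:R - k%:R) / g.+1%:R]%SET.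

Lemma kappaE : g.+1%:R * kappa = k%:R.
Proof. by rewrite /kappa mulrC divfK // pnatr_eq0. Qed.

Lemma kset_charrow : a = charrow R S - const_mx kappa.
Proof.
have hi : (g.+1%:R - k%:R) / g.+1%:R = 1 - kappa :> R.
  by rewrite /kappa mulrBl divff // pnatr_eq0.
case: a_in_k => a01 _; apply/matrixP => i j; rewrite ord1 !mxE inE.
have ne : (- kappa == 1 - kappa) = false.
  by apply/negbTE/eqP; lra.
by case: (a01 j) => ->; rewrite hi -/kappa ?ne ?eqxx ?subrK ?add0r.
Qed.

Definition psi0 : 'rV[R]_(1 + g) := a *m M + const_mx kappa.

Lemma psi0E : psi0 = row_mx (k%:R - #|S|%:R)%:M (charrow R S).
Proof.
rewrite /psi0 mul_bananaM -row_mx_const add_row_mx kset_charrow addrNK.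
congr row_mx; apply/matrixP => i j; rewrite !ord1 !mxE /=.
rewrite vsumB vsum_charrow vsum_const -kappaE mulr_natl mulrS !mulr1n; lra.
Qed.

Lemma psi0_row01 j : psi0 0 j = 0 \/ psi0 0 j = 1.
Proof.
rewrite psi0E -(splitK j); case: (split j) => j'; last by rewrite row_mxEr; apply: charrow01.
rewrite row_mxEl !ord1 mxE /= mulr1n.
case: a_in_k => _ [] ->; first by left; rewrite subrr.
by right; rewrite -{1}(prednK k_gt0) -natr1; lra.
Qed.

Lemma vsum_psi0 : vsum psi0 = k%:R.
Proof. by rewrite /psi0 vsumD vsum_mul_bananaM add0r vsum_const -kappaE mulr_natl. Qed.

Lemma dotv_psi0 : dotv psi0 psi0 = k%:R.
Proof. by rewrite dotv_row01 ?vsum_psi0 //; apply: psi0_row01. Qed.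

Lemma psi0_int : psi0 \is a mxOver Num.int.
Proof. by rewrite (row01_charrow psi0_row01) charrow_int. Qed.

Definition psi : 'rV[R]_g -> 'rV[R]_(1 + g) := affmap (- M) psi0.

Lemma psiE x : psi x = (a - x) *m M + const_mx kappa.
Proof. by rewrite /psi /affmap /psi0 mulmxN mulmxBl addrCA addrA. Qed.

Lemma vsum_psi x : vsum (psi x) = k%:R.
Proof. by rewrite /psi /affmap vsumD mulmxN -mulNmx vsum_mul_bananaM add0r vsum_psi0. Qed.

Lemma qform_psi x :
  qform Q (a - x) = dotv (psi x) (psi x) - kappa *+ 2 * k%:R + kappa ^+ 2 *+ (1 + g).
Proof. by rewrite qform_bananaQ -[_ *m M](addrK (const_mx kappa)) -psiE dotv_shift vsum_psi. Qed.

Lemma qform_sub_eq x : qform Q a = qform Q (a - x) <-> dotv (psi x) (psi x) = k%:R.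
Proof.
rewrite -{1}[a]subr0 !qform_psi.
have -> : psi 0 = psi0 by rewrite /psi /affmap mul0mx add0r.
by rewrite dotv_psi0; split=> [|->] //; lra.
Qed.

Lemma psi_int x : (psi x \is a mxOver Num.int) = (x \is a mxOver Num.int).
Proof.
apply/idP/idP => xint; last first.
  exact: mxOverD (mxOverM xint (mxOverN (bananaM_int R g))) psi0_int.
have -> : x = (psi0 - psi x) *m bananaP R g.
  by rewrite /psi /affmap opprD addrCA subrr addr0 mulmxN opprK -mulmxA bananaMP mulmx1.
exact: mxOverM (mxOverD psi0_int (mxOverN xint)) (bananaP_int R g).
Qed.

Lemma delaunay_ptsE c :
  delaunay_pts Q a c <-> exists I : {set 'I_(1 + g)}, #|I| = k /\ psi c = charrow R I.
Proof.
split=> [[z [-> /qform_sub_eq psi_sqr]]|[I [cardI psiI]]].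
  have /int_dotv_vsum_row01 psi01 : psi (intpt R z) \is a mxOver Num.int.
    by rewrite psi_int; apply/intptP; exists z.
  have {}psi01 := psi01 (etrans psi_sqr (esym (vsum_psi _))).
  exists [set j | psi (intpt R z) 0 j == 1]%SET; split; last exact: row01_charrow.
  by apply/eqP; rewrite -(eqr_nat R) -vsum_charrow -(row01_charrow psi01) vsum_psi.
have /intptP [z cz] : c \is a mxOver Num.int by rewrite -psi_int psiI charrow_int.
by exists z; split=> //; apply/qform_sub_eq; rewrite psiI dotv_charrow cardI.
Qed.

Lemma psi_surj y : vsum y = k%:R -> psi ((psi0 - y) *m bananaP R g) = y.
Proof.
move=> yk; rewrite /psi /affmap mulmxN mul_bananaPM ?opprB ?subrK //.
by rewrite vsumB yk vsum_psi0 subrr.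
Qed.

Lemma image_delaunay_pts : psi @` delaunay_pts Q a =
  [set x | exists I : {set 'I_(1 + g)}, #|I| = k /\ x = charrow R I].
Proof.
apply/seteqP; split=> [_ [c /delaunay_ptsE [I [cardI psiI]] <-]|_ [I [cardI ->]]].
  by exists I.
have psiI : psi ((psi0 - charrow R I) *m bananaP R g) = charrow R I.
  by apply: psi_surj; rewrite vsum_charrow cardI.
by exists ((psi0 - charrow R I) *m bananaP R g) => //; apply/delaunay_ptsE; exists I.
Qed.

Lemma image_delaunay : psi @` delaunay Q a = @hypersimplex R k g.+1.
Proof. by rewrite /delaunay conv_affmap_image image_delaunay_pts. Qed.

End DelaunayPolytope.

Theorem corollary3p6 (R : realType) (g k : nat) (a : 'rV[R]_g) :
  (1 <= g)%N -> (1 <= k <= g)%N ->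
  @kset R g k a -> is_vertex (voronoi (@bananaQ R g)) a ->
  comb_equiv (delaunay (@bananaQ R g) a) (@hypersimplex R k g.+1).
Proof.
move=> _ /andP[k_gt0 _] a_in_k _.
rewrite -(image_delaunay k_gt0 a_in_k).
have MP : - bananaM R g *m - bananaP R g = 1%:M by rewrite mulmxN mulNmx opprK bananaMP.
exact: comb_equiv_affmap_image MP _.
Qed.
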